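(* Let $p_1,\dots,p_m\in[0,1]$ and let $(\ell_{i:n})_{0\le i\le n\le m}$ be reals with $\ell_{0:n}=-1$ for all $n$, such that $n\mapsto\ell_{i:n}$ is nonincreasing and $i\mapsto\ell_{i:n}$ is nondecreasing. For $A\subseteq\{1,\dots,m\}$ and $t\in[0,1]$ set $\varphi_{A,t}=\mathbf 1\{t\le\ell_{i_A(t):|A|}\}$. Then for all $S\subseteq\{1,\dots,m\}$, $n\in\{0,\dots,|S|\}$, $t\in[0,1]$, $$\varphi_{S,n,t}=\min_{0\le k\le i_{S^c}(t)}\mathbf 1\Big\{t\le\ell_{\left((n+i_S(t)-|S|)\vee0+k\right):\left(n+m-|S|-i_{S^c}(t)+k\right)}\Big\}.$$ In particular $\varphi_{\{1,\dots,m\},n,t}=\mathbf 1\{t\le\ell_{((n+i(t)-m)\vee 0):n}\}$.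
   Context: $i_A(t)=\sum_{j\in A}\mathbf 1\{p_j\le t\}$, $i(t)=i_{\{1,\dots,m\}}(t)$, $S^c=\{1,\dots,m\}\setminus S$. $\varphi_{S,n,t}=\min\{\varphi_{A,t}: A\subseteq\{1,\dots,m\},\ |A\cap S|=n\}$. *)

From mathcomp Require Import all_boot all_order all_algebra.
Set Implicit Arguments. Unset Strict Implicit. Unset Printing Implicit Defensive.
Import Order.TTheory GRing.Theory Num.Theory.
Local Open Scope ring_scope.

Section Defs.
Variables (R : realFieldType) (m : nat).

Definition icount (p : 'I_m -> R) (A : {set 'I_m}) (t : R) : nat :=
  #|[set j in A | p j <= t]|.

Definition ind (b : bool) : R := (b : nat)%:R.

Definition phiA (l : nat -> nat -> R) (p : 'I_m -> R) (A : {set 'I_m}) (t : R) : R :=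
  ind (t <= l (icount p A t) #|A|).

Definition phiSn (l : nat -> nat -> R) (p : 'I_m -> R) (S : {set 'I_m}) (n : nat)
  (t : R) : R :=
  \big[Num.min/1]_(A : {set 'I_m} | #|A :&: S| == n) phiA l p A t.

End Defs.

From mathcomp Require Import all_boot all_order all_algebra.
From mathcomp Require Import zify.
Set Implicit Arguments. Unset Strict Implicit. Unset Printing Implicit Defensive.
Import Order.TTheory GRing.Theory Num.Theory.
Local Open Scope ring_scope.

(* Split {1..m} into the four cells S∩P, S\P, S^c∩P, S^c\P, where P = {j : p_j <= t}.
   A set A with |A∩S| = n meets S∩P in at least (n - |S\P|) ∨ 0 points, and meets S^c in
   k points of P and at most |S^c\P| points outside P, for some k <= i_{S^c}(t). The two
   monotonicity assumptions on l then bound phi_{A,t} below by the k-th term of the minimum,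
   and filling the cells greedily shows that every term is attained by some A. *)

Lemma exists_subset_card (T : finType) (X : {set T}) (k : nat) :
  (k <= #|X|)%N -> exists2 B : {set T}, B \subset X & #|B| = k.
Proof.
elim: k => [|k IHk] hk; first by exists set0; rewrite ?sub0set ?cards0.
have [B sBX cardB] := IHk (ltnW hk).
have : (0 < #|X :\: B|)%N by rewrite cardsDS // cardB subn_gt0.
case/card_gt0P => x; rewrite inE => /andP[xNB xX].
exists (x |: B); first by rewrite subUset sub1set xX sBX.
by rewrite cardsU1 xNB cardB.
Qed.

Lemma exists_subset_cardID (T : finType) (X P : {set T}) (a b : nat) :
  (a <= #|X :&: P|)%N -> (b <= #|X :\: P|)%N ->
  exists B : {set T}, [/\ B \subset X, #|B :&: P| = a & #|B :\: P| = b].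
Proof.
move=> /exists_subset_card[B1 sB1 cardB1] /exists_subset_card[B2 sB2 cardB2].
have [sB1X sB1P] : B1 \subset X /\ B1 \subset P by apply/andP; rewrite -subsetI.
have [sB2X sB2P] : B2 \subset X /\ [disjoint B2 & P].
  by move: sB2; rewrite setDE subsetI -disjoints_subset => /andP.
exists (B1 :|: B2); split; first by rewrite subUset sB1X.
- by rewrite setIUl (setIidPl sB1P) disjoint_setI0 // setU0.
- by rewrite setDUl (setDidPl sB2P) (eqP (_ : B1 :\: P == set0)) ?set0U // setD_eq0.
Qed.

Lemma cardsID_I (T : finType) (S A P : {set T}) :
  (#|A :&: S :&: P| + #|(A :\: S) :&: P|)%N = #|A :&: P|.
Proof. by rewrite setIAC setIDAC cardsID. Qed.

Lemma setU_complI (T : finType) (S B C : {set T}) :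
  B \subset S -> C \subset ~: S -> (B :|: C) :&: S = B /\ (B :|: C) :\: S = C.
Proof.
move=> sBS; rewrite -disjoints_subset => dCS.
rewrite setIUl setDUl (setIidPl sBS) (disjoint_setI0 dCS) (setDidPl dCS).
by rewrite (eqP (_ : B :\: S == set0)) ?setU0 ?set0U // setD_eq0.
Qed.

Lemma ind_mono (R : realFieldType) (b b' : bool) : (b -> b') -> @ind R b <= @ind R b'.
Proof. by case: b; case: b' => // /(_ isT). Qed.

Lemma ind_le1 (R : realFieldType) (b : bool) : @ind R b <= 1.
Proof. by case: b; rewrite /ind /= ?ler01 ?lexx. Qed.

Section PhiSn.
Variables (R : realFieldType) (m : nat) (p : 'I_m -> R) (l : nat -> nat -> R).
Hypothesis hln :
  forall i k k', (i <= k)%N -> (k <= k')%N -> (k' <= m)%N -> l i k' <= l i k.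
Hypothesis hli :
  forall i i' k, (i <= i')%N -> (i' <= k)%N -> (k <= m)%N -> l i k <= l i' k.
Variables (S : {set 'I_m}) (n : nat) (t : R).
Hypothesis le_nS : (n <= #|S|)%N.

Let P : {set 'I_m} := [set j | p j <= t].

Lemma icountE A : icount p A t = #|A :&: P|.
Proof. by apply: eq_card => j; rewrite !inE. Qed.

Definition phi_term (k : nat) : R :=
  @ind R (t <= l (n + icount p S t - #|S| + k)%N (n + m - #|S| - icount p (~: S) t + k)%N).

Lemma card_cellsS : (#|S :&: P| + #|S :\: P| + (#|~: S :&: P| + #|~: S :\: P|) = m)%N.
Proof. by rewrite !cardsID cardsC card_ord. Qed.

Lemma phiA_ge_term (A : {set 'I_m}) :
  #|A :&: S| = n -> phi_term #|(A :\: S) :&: P| <= phiA l p A t.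
Proof.
move=> cardAS; rewrite /phi_term /phiA !icountE.
apply: ind_mono => /le_trans; apply.
have cellsAS := cardsID P (A :&: S).
have cellsAS' := cardsID P (A :\: S).
have cardAP := cardsID_I S A P.
have cardA := cardsID S A.
have sAS' : A :\: S \subset ~: S by rewrite setDE subsetIr.
have le_ASP : (#|A :&: S :\: P| <= #|S :\: P|)%N.
  by apply/subset_leq_card/setSD/subsetIr.
have le_AS'P : (#|(A :\: S) :&: P| <= #|~: S :&: P|)%N.
  by apply/subset_leq_card/setSI.
have le_AS'P' : (#|A :\: S :\: P| <= #|~: S :\: P|)%N.
  by apply/subset_leq_card/setSD.
have cellsS := cardsID P S.
have cells := card_cellsS.
(* first enlarge the size index from |A| to its bound, then lower the count index *)
apply: le_trans (hln _ _ _) (hli _ _ _); lia.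
Qed.

Lemma phi_term_attained k : (k <= #|~: S :&: P|)%N ->
  exists2 A : {set 'I_m}, #|A :&: S| = n & phiA l p A t = phi_term k.
Proof.
move=> le_k.
have cellsS := cardsID P S.
have [B [sBS cardBP cardBP']] := @exists_subset_cardID _ S P (n - minn n #|S :\: P|)
  (minn n #|S :\: P|) ltac:(lia) ltac:(lia).
have [C [sCS' cardCP cardCP']] := @exists_subset_cardID _ (~: S) P k #|~: S :\: P|
  le_k (leqnn _).
have [AS AS'] := setU_complI sBS sCS'.
have cardB := cardsID P B.
have cardC := cardsID P C.
have cells := card_cellsS.
exists (B :|: C); first by rewrite AS; lia.
rewrite /phiA /phi_term !icountE -(cardsID_I S) -(cardsID S (B :|: C)) AS AS'.
congr (@ind R (t <= l _ _)); lia.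
Qed.

Lemma phiSn_eq_min :
  phiSn l p S n t = \big[Num.min/1]_(k < (icount p (~: S) t).+1) phi_term k.
Proof.
apply/le_anti/andP; split.
- apply: le_bigmin => [|[k /= le_k] _]; first exact: bigmin_le_id.
  rewrite icountE in le_k; have [A cardAS <-] := phi_term_attained le_k.
  by apply: (bigmin_inf A); rewrite ?cardAS.
- apply: le_bigmin => [|A /eqP cardAS]; first exact: bigmin_le_id.
  have le_k : (#|(A :\: S) :&: P| < (icount p (~: S) t).+1)%N.
    by rewrite icountE ltnS subset_leq_card // setSI // setDE subsetIr.
  exact: (bigmin_inf (Ordinal le_k)) (phiA_ge_term cardAS).
Qed.

End PhiSn.

Theorem mainTheorem7 (R : realFieldType) (m : nat) (p : 'I_m -> R)
  (l : nat -> nat -> R)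
  (hp : forall j, 0 <= p j <= 1)
  (hl0 : forall n, (n <= m)%N -> l 0%N n = -1)
  (hln : forall i n n', (i <= n)%N -> (n <= n')%N -> (n' <= m)%N -> l i n' <= l i n)
  (hli : forall i i' n, (i <= i')%N -> (i' <= n)%N -> (n <= m)%N -> l i n <= l i' n) :
  (forall (S : {set 'I_m}) (n : nat) (t : R),
     (n <= #|S|)%N -> 0 <= t <= 1 ->
     phiSn l p S n t =
     \big[Num.min/1]_(k < (icount p (~: S) t).+1)
        @ind R (t <= l ((n + icount p S t - #|S|) + k)%N
                    (n + m - #|S| - icount p (~: S) t + k)%N))
  /\
  (forall (n : nat) (t : R), (n <= m)%N -> 0 <= t <= 1 ->
     phiSn l p [set: 'I_m] n t = @ind R (t <= l (n + icount p [set: 'I_m] t - m)%N n)).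
Proof.
split=> [S n t le_nS _ | n t le_nm _]; first exact: phiSn_eq_min.
rewrite phiSn_eq_min /phi_term ?cardsT ?card_ord //.
have -> : icount p (~: [set: 'I_m]) t = 0%N by rewrite icountE setCT set0I cards0.
by rewrite big_ord_recl big_ord0 min_l ?ind_le1 // [nat_of_ord _]/= !addn0 subn0 addnK.
Qed.
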